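(* Let $\beta\in(0,1)$. There exists $C_\beta>0$ such that for every $N\in\mathbb{N}$, every minimizer $h\in\{1,\dots,N\}$ of $\mathcal{H}_{\beta,N}$ and every minimizer $l\in\{1,\dots,N\}$ of $\mathcal{L}_{\beta,N}$ satisfy $$|h-h_*|\le C_\beta N^{1/4},\qquad |l-l_*|\le C_\beta N^{1/4},$$ where $h_*=(1-\beta)^{1/2}N^{1/2}$ and $l_*=(1-\beta)^{-1/2}N^{1/2}$. Moreover, if $\beta\notin\mathbb{Q}$, the minimizers of $\mathcal{H}_{\beta,N}$ and of $\mathcal{L}_{\beta,N}$ are unique.
   Context: For $N\in\mathbb{N}$ and $\beta\in(0,1)$ define $\mathcal{H}_{\beta,N},\mathcal{L}_{\beta,N}:\{1,\dots,N\}\to\mathbb{R}$ by $\mathcal{H}_{\beta,N}(h)=2h+2(1-\beta)\lceil N/h\rceil$ and $\mathcal{L}_{\beta,N}(l)=2\lceil N/l\rceil+2(1-\beta)l$. *)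

From mathcomp Require Import all_boot all_order all_algebra.
From mathcomp Require Import reals.
Set Implicit Arguments. Unset Strict Implicit. Unset Printing Implicit Defensive.
Import Order.TTheory GRing.Theory Num.Theory.
Local Open Scope ring_scope.

Definition Hfun (R : realType) (beta : R) (N h : nat) : R :=
  2 * h%:R + 2 * (1 - beta) * (Num.ceil (N%:R / h%:R : R))%:~R.

Definition Lfun (R : realType) (beta : R) (N l : nat) : R :=
  2 * (Num.ceil (N%:R / l%:R : R))%:~R + 2 * (1 - beta) * l%:R.

Definition is_minimizer (R : realType) (f : nat -> R) (N h : nat) : Prop :=
  (1 <= h <= N)%N /\ forall h' : nat, (1 <= h' <= N)%N -> f h <= f h'.

(* A minimizer [h] of [h + c ⌈N/h⌉] is compared with an integer [h0] next to
   [x = sqrt (c N)], for which [(h0 - x)^2 <= (1 + c) h0].  Since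
   [N <= h ⌈N/h⌉ <= N + h], minimality gives [h^2 + x^2 <= h (h + c ⌈N/h⌉)
   <= h (2 x + 1 + 2 c)], i.e. [(h - x)^2 <= (1 + 2 c) h = O(sqrt N)].  Both
   [H] and [L] are positive multiples of such a cost, with [c = 1 - beta] and
   [c = (1 - beta)^-1] respectively.  Two minimizers have equal values, which
   yields an integer relation [m + n beta = 0]; irrationality forces [n = 0],
   and then the minimizers coincide. *)
From mathcomp Require Import all_boot all_order all_algebra.
From mathcomp Require Import reals ring lra.
Set Implicit Arguments. Unset Strict Implicit. Unset Printing Implicit Defensive.
Import Order.TTheory GRing.Theory Num.Theory.
Local Open Scope ring_scope.

Section Minimizer.
Variables (R : realType) (N : nat).

Lemma minimizer_eq_value (f : nat -> R) (a b : nat) :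
  is_minimizer f N a -> is_minimizer f N b -> f a = f b.
Proof. by move=> [ra ma] [rb mb]; apply/eqP; rewrite eq_le ma // mb. Qed.

Lemma is_minimizer_scale (k : R) (f g : nat -> R) (h : nat) :
  0 < k -> (forall n, f n = k * g n) -> is_minimizer f N h -> is_minimizer g N h.
Proof. by move=> k0 fE [rh mh]; split=> // h' /mh; rewrite !fE ler_pM2l. Qed.

End Minimizer.

Definition ceil_cost (R : realType) (c : R) (N h : nat) : R :=
  h%:R + c * (Num.ceil (N%:R / h%:R : R))%:~R.

Lemma HfunE (R : realType) (beta : R) (N h : nat) :
  Hfun beta N h = 2 * ceil_cost (1 - beta) N h.
Proof. by rewrite /Hfun /ceil_cost; ring. Qed.

Lemma LfunE (R : realType) (beta : R) (N l : nat) : beta < 1 ->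
  Lfun beta N l = 2 * (1 - beta) * ceil_cost (1 - beta)^-1 N l.
Proof. by move=> b1; rewrite /Lfun /ceil_cost; field; rewrite subr_eq0 gt_eqF. Qed.

Lemma ceil_div_mul_bounds (R : realType) (x y : R) : 0 < y ->
  x <= (Num.ceil (x / y))%:~R * y <= x + y.
Proof.
move=> y0; have /andP[lo hi] := ceil_itv (x / y).
rewrite intrB /= in lo.
rewrite -ler_pdivrMr // hi /= -ler_pdivlMr // mulrDl divff ?gt_eqF //; lra.
Qed.

Lemma exists_int_near_sqrt (R : realType) (c x : R) (N : nat) :
  (1 <= N)%N -> 0 <= x -> x ^+ 2 = c * N%:R ->
  exists2 h0 : nat, (1 <= h0 <= N)%N & (h0%:R - x) ^+ 2 <= (1 + c) * h0%:R.
Proof.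
move=> N1 x0 xE; have /andP[t1 t2] := truncn_itv x0.
have N1' : 1 <= N%:R :> R by rewrite ler1n.
have c0 : 0 <= c by nra.
have [ltxN | leNx] := ltnP (Num.truncn x) N.
- exists (Num.truncn x).+1; first by rewrite ltnS leq0n ltxN.
  have h1 : 1 <= (Num.truncn x).+1%:R :> R by rewrite ler1n.
  rewrite -natr1 in t2 h1 *; nra.
- exists N; first by rewrite N1 leqnn.
  have Nx : N%:R <= x by apply: le_trans t1; rewrite ler_nat.
  nra.
Qed.

(* [q] and [q0] stand for the ceilings [⌈N/h⌉] and [⌈N/h0⌉]. *)
Lemma sq_dev_le_of_cost_le (R : realType) (c N h h0 x q q0 : R) :
  0 < c -> 1 <= h -> 1 <= h0 -> x ^+ 2 = c * N ->
  h + c * q <= h0 + c * q0 -> N <= q * h -> q0 * h0 <= N + h0 ->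
  (h0 - x) ^+ 2 <= (1 + c) * h0 ->
  (h - x) ^+ 2 <= (1 + 2 * c) * h.
Proof.
move=> c0 h1 h01 xE le_cost Nq q0N near_h0.
have cost_h0 : h0 + c * q0 <= 2 * x + 1 + 2 * c.
  have cq0N : c * (q0 * h0) <= c * (N + h0) by rewrite ler_pM2l.
  have : h0 * (h0 + c * q0) <= h0 * (2 * x + 1 + 2 * c) by nra.
  by rewrite ler_pM2l //; lra.
have cNq : c * N <= c * (q * h) by rewrite ler_pM2l.
have : h * (h + c * q) <= h * (2 * x + 1 + 2 * c) by rewrite ler_pM2l; lra.
nra.
Qed.

Lemma abs_le_sqrtM (R : rcfType) (d M s : R) :
  0 <= M -> d ^+ 2 <= M * s -> `|d| <= Num.sqrt M * Num.sqrt s.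
Proof. by move=> M0 le_dMs; rewrite -sqrtr_sqr -sqrtrM //; apply: ler_wsqrtr. Qed.

Definition dev_const (R : realType) (c : R) : R :=
  Num.sqrt ((1 + 2 * c) * (2 * Num.sqrt c + 1 + 2 * c)).

Section CeilCostMinimizer.
Variables (R : realType) (c : R) (N h : nat).

Local Notation x := (Num.sqrt c * Num.sqrt N%:R : R).

Lemma ceil_cost_minimizer_sq_dev :
  0 < c -> is_minimizer (ceil_cost c N) N h ->
  (h%:R - x) ^+ 2 <= (1 + 2 * c) * h%:R.
Proof.
move=> c0 [/andP[h1 hN] mh].
have N1 : (1 <= N)%N by apply: leq_trans hN.
have x0 : 0 <= x by rewrite mulr_ge0 ?sqrtr_ge0.
have xE : x ^+ 2 = c * N%:R by rewrite exprMn !sqr_sqrtr // ltW.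
have [h0 /andP[h01 h0N] near_h0] := exists_int_near_sqrt N1 x0 xE.
have h1' : 0 < h%:R :> R by rewrite ltr0n.
have h01' : 0 < h0%:R :> R by rewrite ltr0n.
have /andP[Nq _] := ceil_div_mul_bounds N%:R h1'.
have /andP[_ q0N] := ceil_div_mul_bounds N%:R h01'.
apply: sq_dev_le_of_cost_le c0 _ _ xE (mh h0 _) Nq q0N near_h0.
- by rewrite ler1n.
- by rewrite ler1n.
- by rewrite h01.
Qed.

Lemma ceil_cost_minimizer_dev :
  0 < c -> is_minimizer (ceil_cost c N) N h ->
  `|h%:R - x| <= dev_const c * Num.sqrt (Num.sqrt N%:R).
Proof.
move=> c0 hmin; have [/andP[h1 hN] _] := hmin.
have sq := ceil_cost_minimizer_sq_dev c0 hmin.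
have sc0 := sqrtr_ge0 c.
have sN1 : 1 <= Num.sqrt N%:R :> R.
  by rewrite -{1}sqrtr1 ler_wsqrtr // ler1n (leq_trans h1 hN).
have h_le : h%:R <= 2 * x + (1 + 2 * c).
  have hr1 : 1 <= h%:R :> R by rewrite ler1n.
  have : h%:R * h%:R <= h%:R * (2 * x + (1 + 2 * c)) by nra.
  by rewrite ler_pM2l; lra.
have M0 : 0 <= (1 + 2 * c) * (2 * Num.sqrt c + 1 + 2 * c) by nra.
apply: abs_le_sqrtM M0 (le_trans sq _).
rewrite -mulrA ler_pM2l; last lra.
apply: (le_trans h_le); nra.
Qed.

End CeilCostMinimizer.

Lemma irrational_int_relation (R : realType) (beta : R) (m n : int) :
  irrational beta -> m%:~R + n%:~R * beta = 0 -> n = 0.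
Proof.
move=> irr rel; have [//|n0] := eqVneq n 0; case: irr.
exists (- m%:Q / n%:Q) => //.
rewrite fmorph_div rmorphN /= !ratr_int.
have n0' : n%:~R != 0 :> R by rewrite intr_eq0.
by apply: (mulIf n0'); rewrite divfK //; lra.
Qed.

Lemma Hfun_minimizer_dev (R : realType) (beta : R) (N h : nat) : beta < 1 ->
  is_minimizer (Hfun beta N) N h ->
  `|h%:R - Num.sqrt (1 - beta) * Num.sqrt N%:R|
    <= dev_const (1 - beta) * Num.sqrt (Num.sqrt N%:R).
Proof.
move=> b1 hmin.
apply: ceil_cost_minimizer_dev _ (is_minimizer_scale _ (HfunE beta N) hmin) => //.
by rewrite subr_gt0.
Qed.

Lemma Lfun_minimizer_dev (R : realType) (beta : R) (N l : nat) : beta < 1 ->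
  is_minimizer (Lfun beta N) N l ->
  `|l%:R - (Num.sqrt (1 - beta))^-1 * Num.sqrt N%:R|
    <= dev_const (1 - beta)^-1 * Num.sqrt (Num.sqrt N%:R).
Proof.
move=> b1 lmin; have b1' : 0 < 1 - beta by rewrite subr_gt0.
rewrite -sqrtrV; last exact: ltW.
apply: ceil_cost_minimizer_dev _ (is_minimizer_scale _ (LfunE N ^~ b1) lmin).
- by rewrite invr_gt0.
- by rewrite mulr_gt0.
Qed.

Section Uniqueness.
Variables (R : realType) (beta : R) (N : nat).
Hypothesis irr : irrational beta.

Lemma Hfun_minimizer_unique (h1 h2 : nat) :
  is_minimizer (Hfun beta N) N h1 -> is_minimizer (Hfun beta N) N h2 -> h1 = h2.
Proof.
move=> m1 m2; have := minimizer_eq_value m1 m2; rewrite /Hfun.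
set q1 := Num.ceil _; set q2 := Num.ceil _ => eq_val.
have rel : (h1%:Z - h2%:Z + q1 - q2)%:~R + (q2 - q1)%:~R * beta = 0 :> R.
  by rewrite !(intrD, intrB) /=; lra.
have /eqP := irrational_int_relation irr rel; rewrite subr_eq0 => /eqP eq_q.
by apply/eqP; rewrite -(eqr_nat R); apply/eqP; move: eq_val; rewrite eq_q; lra.
Qed.

Lemma Lfun_minimizer_unique (l1 l2 : nat) :
  is_minimizer (Lfun beta N) N l1 -> is_minimizer (Lfun beta N) N l2 -> l1 = l2.
Proof.
move=> m1 m2; have := minimizer_eq_value m1 m2; rewrite /Lfun.
set q1 := Num.ceil _; set q2 := Num.ceil _ => eq_val.
have rel : (q1 - q2 + l1%:Z - l2%:Z)%:~R + (l2%:Z - l1%:Z)%:~R * beta = 0 :> R.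
  by rewrite !(intrD, intrB) /=; lra.
have /eqP := irrational_int_relation irr rel.
by rewrite subr_eq0 => /eqP [].
Qed.

End Uniqueness.

Theorem lemma4p3 (R : realType) (beta : R) (hb0 : 0 < beta) (hb1 : beta < 1) :
  (exists C : R, 0 < C /\
     forall N : nat,
       (forall h : nat, is_minimizer (Hfun beta N) N h ->
          `|h%:R - Num.sqrt (1 - beta) * Num.sqrt N%:R| <= C * Num.sqrt (Num.sqrt N%:R)) /\
       (forall l : nat, is_minimizer (Lfun beta N) N l ->
          `|l%:R - (Num.sqrt (1 - beta))^-1 * Num.sqrt N%:R| <= C * Num.sqrt (Num.sqrt N%:R)))
  /\
  (@irrational R beta ->
     forall N : nat,
       (forall h1 h2 : nat, is_minimizer (Hfun beta N) N h1 ->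
          is_minimizer (Hfun beta N) N h2 -> h1 = h2) /\
       (forall l1 l2 : nat, is_minimizer (Lfun beta N) N l1 ->
          is_minimizer (Lfun beta N) N l2 -> l1 = l2)).
Proof.
split; last first.
  by move=> irr N; split; [exact: Hfun_minimizer_unique | exact: Lfun_minimizer_unique].
have CH0 : 0 <= dev_const (1 - beta) by apply: sqrtr_ge0.
have CL0 : 0 <= dev_const (1 - beta)^-1 by apply: sqrtr_ge0.
exists (dev_const (1 - beta) + dev_const (1 - beta)^-1 + 1); split=> [|N]; first lra.
have s0 : 0 <= Num.sqrt (Num.sqrt N%:R) :> R by apply: sqrtr_ge0.
split=> [h /(Hfun_minimizer_dev hb1) | l /(Lfun_minimizer_dev hb1)] /le_trans; apply;
  by apply: ler_wpM2r => //; lra.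
Qed.
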